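(* Let $s>1$, $n \geq 2$ and $k \geq 1$ be given ($s$ real, $n,k$ integers). Then $$H_k(n) \leq \frac{\left(\zeta(s)-1\right)^{k-1} n^s}{2^s}.$$ Moreover, if $n$ is odd, then $$H_k(n) \leq \frac{\left(\left(1-2^{-s}\right)\zeta(s)-1\right)^{k-1} n^s}{3^s}.$$
   Context: $H_k(n)$ is the number of ordered $k$-tuples $(d_1,\dots,d_k)$ of integers $d_i\ge 2$ with $d_1\cdots d_k=n$. $\zeta$ is the Riemann zeta function. *)

From HB Require Import structures.
From mathcomp Require Import all_boot all_order all_algebra.
From mathcomp Require Import all_classical all_reals all_analysis.
Set Implicit Arguments. Unset Strict Implicit. Unset Printing Implicit Defensive.
Import Order.TTheory GRing.Theory Num.Theory numFieldNormedType.Exports.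

(* H k n : number of ordered k-tuples (d_1,...,d_k) of integers d_i >= 2 with
   d_1 * ... * d_k = n.  For n >= 1 every such d_i divides n, hence d_i <= n,
   so it suffices to let the entries range over 'I_n.+1 = {0,...,n}. *)
Definition H (k n : nat) : nat :=
  #|[set t : {ffun 'I_k -> 'I_n.+1} |
      [forall i, 1 < (t i : nat)] && (\prod_(i < k) (t i : nat) == n)]|.

Local Open Scope ring_scope.

Definition zeta (R : realType) (s : R) : R :=
  limn (series (fun m : nat => (m.+1)%:R `^ (- s))).

From HB Require Import structures.
From mathcomp Require Import all_boot all_order all_algebra.
From mathcomp Require Import all_classical all_reals all_analysis.
From mathcomp Require Import lra.

(* Dropping the last factor of an ordered factorisation n = d_1 ... d_k is
   injective, and what remains is a tuple of admissible factors (d >= 2, and d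
   odd when n is odd) with b d_1 ... d_(k-1) <= n, where b = 2 (resp. 3) is the
   least admissible factor.  Weighting each such tuple by
   (n / (b d_1 ... d_(k-1)))^s >= 1, the total weight factorises as
   (n / b)^s (sum of d^-s over admissible d)^(k-1).  That sum is at most
   zeta(s) - 1, resp. (1 - 2^-s) zeta(s) - 1, because removing the even terms
   of zeta(s) leaves (1 - 2^-s) zeta(s). *)

Set Implicit Arguments.
Unset Strict Implicit.
Unset Printing Implicit Defensive.

Import Order.TTheory GRing.Theory Num.Theory numFieldNormedType.Exports.
Local Open Scope ring_scope.

Lemma sum_nat_odd_double (V : nmodType) (f : nat -> V) M :
  \sum_(1 <= d < M.*2.+2) f d
  = \sum_(1 <= d < M.*2.+2 | odd d) f d + \sum_(1 <= d < M.+1) f d.*2.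
Proof.
elim: M => [|M IH].
  by rewrite double0 [in RHS]big_mkcond !big_nat1 big_geq // addr0.
rewrite doubleS big_nat_recr // big_nat_recr //= IH.
rewrite [in RHS]big_mkcond big_nat_recr // big_nat_recr //= -big_mkcond.
rewrite [X in _ = _ + X]big_nat_recr //= odd_double /=.
by rewrite addr0 doubleS [RHS]addrACA -addrA [f _ + f _]addrC.
Qed.

Lemma sum_nat_odd_le_double (R : numDomainType) (f : nat -> R) M :
  (forall d, (0 < d)%N -> f d.+1 <= f d) ->
  \sum_(1 <= d < M.*2.+2 | odd d) f d <= f 1 + \sum_(1 <= d < M.+1) f d.*2.
Proof.
move=> f_noninc; elim: M => [|M IH].
  by rewrite double0 big_mkcond !big_nat1 big_geq // addr0.
rewrite doubleS big_mkcond big_nat_recr // big_nat_recr //= -big_mkcond.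
by rewrite odd_double /= big_nat_recr //= addrA addr0 lerD // doubleS f_noninc.
Qed.

Lemma sum_nat_widen_le (R : numDomainType) (P : pred nat) (f : nat -> R)
    m n n' :
  (forall d, 0 <= f d) -> (n <= n')%N ->
  \sum_(m <= d < n | P d) f d <= \sum_(m <= d < n' | P d) f d.
Proof.
move=> f_ge0 le_nn'; rewrite (big_nat_widen _ _ _ _ _ le_nn').
by rewrite [X in _ <= X](bigID (fun d => d < n)%N) /= lerDl sumr_ge0.
Qed.

Section zeta_partial_sums.
Variables (R : realType) (s : R).

Definition zeta_partial (N : nat) : R := \sum_(1 <= d < N.+1) d%:R `^ (- s).

Lemma zetaE : zeta s = limn zeta_partial.
Proof.
rewrite /zeta; suff -> : series (fun m => m.+1%:R `^ (- s)) = zeta_partial.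
  by [].
by apply/funext => N; rewrite /zeta_partial big_add1.
Qed.

Lemma zeta_partial_nondecreasing : nondecreasing_seq zeta_partial.
Proof.
apply/nondecreasing_seqP => N.
by rewrite /zeta_partial [X in _ <= X]big_nat_recr //= lerDl powR_ge0.
Qed.

Lemma sum_powRN_double N :
  \sum_(1 <= d < N.+1) d.*2%:R `^ (- s) = 2 `^ (- s) * zeta_partial N.
Proof.
rewrite /zeta_partial mulr_sumr; apply: eq_bigr => d _.
by rewrite -powRM ?ler0n // -natrM mul2n.
Qed.

Lemma zeta_partial_double N :
  zeta_partial N.*2.+1
  = \sum_(1 <= d < N.*2.+2 | odd d) d%:R `^ (- s) + 2 `^ (- s) * zeta_partial N.
Proof. by rewrite -sum_powRN_double -sum_nat_odd_double. Qed.

Lemma powRN_natr_succ_le d :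
  0 <= s -> (0 < d)%N -> d.+1%:R `^ (- s) <= d%:R `^ (- s).
Proof.
move=> s_ge0 d_gt0; rewrite !powRN lef_pV2 ?posrE ?powR_gt0 ?ltr0n //.
by rewrite ge0_ler_powR ?nnegrE ?ler0n ?ler_nat.
Qed.

Hypothesis s_gt1 : 1 < s.

Lemma powR2_1B_lt1 : 2 `^ (1 - s) < 1.
Proof.
by rewrite /powR pnatr_eq0 expR_lt1 nmulr_rlt0 ?ln_gt0 ?ltr1n // subr_lt0.
Qed.

(* Pairing each odd term 2d + 1 with the even term 2d gives
   zeta_partial (2N + 1) <= 1 + 2^(1-s) zeta_partial N. *)
Lemma zeta_partial_ub N : zeta_partial N <= (1 - 2 `^ (1 - s))^-1.
Proof.
have c_lt1 := powR2_1B_lt1.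
have s_ge0 : 0 <= s by rewrite ltW // (lt_trans ltr01).
have doubling : zeta_partial N.*2.+1 <= 1 + 2 `^ (1 - s) * zeta_partial N.
  rewrite zeta_partial_double powRD ?pnatr_eq0 ?implybT // powRr1 ?ler0n //.
  have := sum_nat_odd_le_double N (fun d => powRN_natr_succ_le s_ge0).
  by rewrite powR1 sum_powRN_double -mulrA => ?; lra.
have le_N : (N <= N.*2.+1)%N by rewrite -addnn leqW ?leq_addr.
have := zeta_partial_nondecreasing le_N => S_le.
by rewrite -[X in _ <= X]mul1r ler_pdivlMr ?subr_gt0 //; nra.
Qed.

Lemma cvgn_zeta_partial : cvgn zeta_partial.
Proof.
apply: nondecreasing_is_cvgn zeta_partial_nondecreasing _.
by exists (1 - 2 `^ (1 - s))^-1 => _ [N _ <-]; exact: zeta_partial_ub.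
Qed.

Lemma zeta_partial_le_zeta N : zeta_partial N <= zeta s.
Proof.
rewrite zetaE.
exact: nondecreasing_cvgn_le zeta_partial_nondecreasing cvgn_zeta_partial N.
Qed.

(* For large M the odd sum is at most zeta s - 2^-s zeta_partial M; let M tend
   to infinity. *)
Lemma sum_odd_le_zeta N :
  \sum_(1 <= d < N.+1 | odd d) d%:R `^ (- s) <= (1 - 2 `^ (- s)) * zeta s.
Proof.
set X := \sum_(_ <= _ < _ | _) _; set c := 2 `^ (- s).
have c_gt0 : 0 < c by rewrite powR_gt0.
have ub M : (N <= M)%N -> zeta_partial M <= (zeta s - X) / c.
  move=> le_NM; rewrite ler_pdivlMr // mulrC.
  have : X <= \sum_(1 <= d < M.*2.+2 | odd d) d%:R `^ (- s).
    apply: sum_nat_widen_le => [d|]; first exact: powR_ge0.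
    by rewrite ltnS -addnn leqW // (leq_trans le_NM) ?leq_addr.
  have := zeta_partial_le_zeta M.*2.+1; rewrite zeta_partial_double -/c; lra.
have : limn zeta_partial <= (zeta s - X) / c.
  apply: limr_le; first exact: cvgn_zeta_partial.
  by near=> m; apply: ub; near: m; exists N.
by rewrite -zetaE ler_pdivlMr // => ?; lra.
Unshelve. all: end_near.
Qed.

Lemma sum_gt1_le_zeta n : (0 < n)%N ->
  \sum_(d < n.+1 | (1 < d)%N) d%:R `^ (- s) <= zeta s - 1.
Proof.
move=> n_gt0; have := zeta_partial_le_zeta n.
rewrite /zeta_partial big_ltn // (big_geq_mkord 2 n.+1 (fun=> true)) powR1.
by move=> ?; lra.
Qed.

Lemma sum_odd_gt1_le_zeta n : (0 < n)%N ->
  \sum_(d < n.+1 | odd d && (1 < d)%N) d%:R `^ (- s)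
  <= (1 - 2 `^ (- s)) * zeta s - 1.
Proof.
move=> n_gt0; have := sum_odd_le_zeta n.
by rewrite big_ltn_cond // big_geq_mkord /= powR1 => ?; lra.
Qed.

End zeta_partial_sums.

Lemma card_le_sum_weight (R : numDomainType) (T : finType) (A : {pred T})
    (w : T -> R) :
  (forall x, 0 <= w x) -> {in A, forall x, 1 <= w x} -> #|A|%:R <= \sum_x w x.
Proof.
move=> w_ge0 w_ge1; rewrite -[#|A|%:R]sumr_const.
apply: le_trans (_ : \sum_(x in A) w x <= _); first exact: ler_sum.
by rewrite [X in _ <= X](bigID (mem A)) /= lerDl sumr_ge0.
Qed.

Lemma prod_natr_powR (R : realType) (I : Type) (r : seq I) (P : pred I)
    (f : I -> nat) (p : R) :
  \prod_(i <- r | P i) (f i)%:R `^ p = (\prod_(i <- r | P i) f i)%:R `^ p.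
Proof.
apply: (big_rec2 (fun x m => x = m%:R `^ p)); first by rewrite powR1.
by move=> i x m _ ->; rewrite natrM powRM.
Qed.

Section drop_last_factor.
Local Open Scope nat_scope.
Variables (Q : pred nat) (b k n : nat).
Hypothesis b_le_Q : forall d, Q d -> b <= d.
Hypothesis Q_dvd : forall d, 1 < d -> d %| n -> Q d.

Definition bounded_Q_tuples := [set u : {ffun 'I_k -> 'I_n.+1} |
  [forall i, Q (u i)] && (b * \prod_(i < k) u i <= n)].

Lemma H_succ_le_card : H k.+1 n <= #|bounded_Q_tuples|.
Proof.
rewrite /H; set A := [set t | _].
pose restr (t : {ffun 'I_k.+1 -> 'I_n.+1}) :=
  [ffun i => t (widen_ord (leqnSn k) i)].
have prodE (t : {ffun 'I_k.+1 -> 'I_n.+1}) :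
    \prod_(i < k.+1) t i = \prod_(i < k) restr t i * t ord_max.
  rewrite big_ord_recr /=; congr (_ * _).
  by apply: eq_bigr => i _; rewrite ffunE.
have restr_inj : {in A &, injective restr}.
  move=> t1 t2; rewrite !inE => /andP[/forallP t1_gt1 /eqP t1n].
  move=> /andP[_ /eqP t2n] eq_t.
  have prod_gt0 : 0 < \prod_(i < k) restr t1 i.
    by rewrite prodn_gt0 // => i; rewrite ffunE ltnW.
  have eq_max : t1 ord_max = t2 ord_max.
    apply/val_inj/eqP; rewrite /= -(eqn_pmul2l prod_gt0).
    by rewrite -prodE t1n eq_t -prodE t2n.
  apply/ffunP => i; have [j ->|->] := unliftP ord_max i; last exact: eq_max.
  have -> : lift ord_max j = widen_ord (leqnSn k) j.
    by apply: val_inj; rewrite /= /bump leqNgt ltn_ord.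
  by move/ffunP: eq_t => /(_ j); rewrite !ffunE.
have restr_sub : restr @: A \subset bounded_Q_tuples.
  apply/fintype.subsetP => _ /imsetP[t + ->].
  rewrite inE => /andP[/forallP t_gt1 /eqP tn].
  have tQ i : Q (t i).
    by rewrite Q_dvd // -[X in _ %| X]tn (bigD1 i) //= dvdn_mulr.
  rewrite inE; apply/andP; split; first by apply/forallP => i; rewrite ffunE.
  by rewrite -[X in _ <= X]tn prodE mulnC leq_mul2l b_le_Q ?orbT.
by rewrite -(card_in_imset restr_inj) subset_leq_card.
Qed.

End drop_last_factor.

Lemma H_succ_le (R : realType) (s : R) (Q : pred nat) (b k n : nat) :
  0 <= s -> (0 < b)%N -> (forall d, Q d -> b <= d)%N ->
  (forall d, 1 < d -> d %| n -> Q d)%N ->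
  (H k.+1 n)%:R
  <= (\sum_(d < n.+1 | Q d) d%:R `^ (- s)) ^+ k * n%:R `^ s / b%:R `^ s.
Proof.
move=> s_ge0 b_gt0 b_le_Q Q_dvd.
pose g (d : 'I_n.+1) : R := if Q d then d%:R `^ (- s) else 0.
have g_ge0 d : 0 <= g d by rewrite /g; case: ifP => // _; exact: powR_ge0.
have -> : \sum_(d < n.+1 | Q d) d%:R `^ (- s) = \sum_d g d.
  by rewrite big_mkcond.
rewrite -[X in _ ^+ X](card_ord k) -prodr_const bigA_distr_bigA.
rewrite -mulrA mulr_suml.
apply: le_trans (_ : #|bounded_Q_tuples Q b k n|%:R <= _).
  by rewrite ler_nat H_succ_le_card.
apply: card_le_sum_weight => u.
  by rewrite mulr_ge0 ?prodr_ge0 ?divr_ge0 ?powR_ge0.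
rewrite inE => /andP[/forallP uQ bP_le].
have P_gt0 : (0 < \prod_(i < k) u i)%N.
  by rewrite prodn_gt0 // => i; apply: leq_trans b_gt0 (b_le_Q _ (uQ i)).
have -> : \prod_i g (u i) = (\prod_(i < k) u i)%:R `^ (- s).
  by rewrite -prod_natr_powR; apply: eq_bigr => i _; rewrite /g uQ.
rewrite powRN mulrCA -invfM -powRM ?ler0n // -natrM.
rewrite ler_pdivlMr ?mul1r ?powR_gt0 ?ltr0n ?muln_gt0 ?P_gt0 //.
by rewrite ge0_ler_powR ?nnegrE ?ler0n // ler_nat mulnC.
Qed.

Theorem corollary2p5 (R : realType) (s : R) (n k : nat) :
  1 < s -> (2 <= n)%N -> (1 <= k)%N ->
  ((H k n)%:R <= (zeta s - 1) ^+ k.-1 * (n%:R `^ s) / (2%:R `^ s)) /\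
  (odd n ->
   (H k n)%:R <= ((1 - 2%:R `^ (- s)) * zeta s - 1) ^+ k.-1 * (n%:R `^ s)
                   / (3%:R `^ s)).
Proof.
move=> s_gt1 n_ge2; case: k => // k _ /=.
have s_ge0 : 0 <= s by rewrite ltW // (lt_trans ltr01).
have n_gt0 : (0 < n)%N by apply: leq_trans n_ge2.
have scale_le (X Y : R) b : 0 <= X -> X <= Y ->
    X ^+ k * n%:R `^ s / b%:R `^ s <= Y ^+ k * n%:R `^ s / b%:R `^ s.
  move=> X_ge0 le_XY; rewrite !ler_wpM2r ?invr_ge0 ?powR_ge0 //.
  by rewrite lerXn2r // nnegrE (le_trans X_ge0).
have sum_ge0 (P : pred nat) : 0 <= \sum_(d < n.+1 | P d) d%:R `^ (- s).
  by rewrite sumr_ge0 // => d _; exact: powR_ge0.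
split => [|n_odd].
  apply: le_trans (H_succ_le (Q := fun d => (1 < d)%N) (b := 2) k s_ge0 _ _ _) _
    => //.
  apply: scale_le (sum_gt1_le_zeta s_gt1 n_gt0).
  exact: (sum_ge0 (fun d => 1 < d)%N).
have Q_dvd d : (1 < d -> d %| n -> odd d && (1 < d))%N.
  by move=> d_gt1 /dvdn_odd/(_ n_odd) ->.
apply: le_trans (H_succ_le (b := 3) k s_ge0 _ _ Q_dvd) _ => //.
  by case=> [|[|[|d]]].
apply: scale_le (sum_odd_gt1_le_zeta s_gt1 n_gt0).
exact: (sum_ge0 (fun d => odd d && (1 < d))%N).
Qed.
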